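(* Let $C$ be a finite, balanced configuration of height $h$ and type $(n_0,\ldots,n_h)$ (with $n_0=n_h=1$). Then $$F_{h,1}=-F_{0,1}=-F_C,\qquad (p_{h,1}-p_{0,1})F_C=\sum_{k=1}^h\frac{1}{n_k}.$$ In particular, the residual force $F_C$ never vanishes.
   Context: Let $h$ be a positive integer and $(n_0,\ldots,n_h)$ positive integers with $n_0=n_h=1$. A finite configuration of type $(n_0,\ldots,n_h)$ is a collection of complex numbers $(p_{k,i})_{0\le k\le h,1\le i\le n_k}$ such that, for each $k$, the points $p_{k,i}$ and $p_{k\pm1,j}$ are pairwise distinct. Set $c_k=1/n_k$ and use the convention $n_{-1}=n_{h+1}=0$ (empty sums). The forces are $$F_{k,i}=2\sum_{j\neq i}\frac{c_k^2}{p_{k,i}-p_{k,j}}-\sum_{j=1}^{n_{k+1}}\frac{c_kc_{k+1}}{p_{k,i}-p_{k+1,j}}-\sum_{j=1}^{n_{k-1}}\frac{c_kc_{k-1}}{p_{k,i}-p_{k-1,j}}$$ for $0\le k\le h$, $1\le i\le n_k$. The configuration is balanced if $F_{k,i}=0$ for $1\le k\le h-1$ and all $i$ (no condition on $F_{0,1}$, $F_{h,1}$). The residual force is $F_C=F_{0,1}$. *)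

From HB Require Import structures.
From mathcomp Require Import all_boot all_order all_algebra.
From mathcomp Require Import reals complex.
Set Implicit Arguments. Unset Strict Implicit. Unset Printing Implicit Defensive.
Import Order.TTheory GRing.Theory Num.Theory.
Local Open Scope ring_scope.

(* A configuration of height h and type (n 0, ..., n h) is given by
   p k i : R[i] for 0 <= k <= h and 0 <= i < n k (0-based point index;
   p k i corresponds to the paper's p_{k,i+1}). *)

Definition cw (n : nat -> nat) (k : nat) {C : fieldType} : C := (n k)%:R^-1.

(* The force F_{k,i}, with the convention n_{-1} = n_{h+1} = 0 (empty sums). *)
Definition force {C : fieldType} (h : nat) (n : nat -> nat)
  (p : nat -> nat -> C) (k i : nat) : C :=
  2 * (\sum_(j < n k | (j : nat) != i) (cw n k) ^+ 2 / (p k i - p k j))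
  - (if (k < h)%N then
       \sum_(j < n k.+1) cw n k * cw n k.+1 / (p k i - p k.+1 j)
     else 0)
  - (if (0 < k)%N then
       \sum_(j < n k.-1) cw n k * cw n k.-1 / (p k i - p k.-1 j)
     else 0).

Definition is_config {C : fieldType} (h : nat) (n : nat -> nat)
  (p : nat -> nat -> C) : Prop :=
  [/\ (0 < h)%N, (forall k, (k <= h)%N -> (0 < n k)%N), n 0%N = 1%N /\ n h = 1%N,
      (forall k i j, (k <= h)%N -> (i < n k)%N -> (j < n k)%N -> i <> j ->
         p k i != p k j)
    & (forall k i j, (k < h)%N -> (i < n k)%N -> (j < n k.+1)%N ->
         p k i != p k.+1 j)].

Definition balanced {C : fieldType} (h : nat) (n : nat -> nat)
  (p : nat -> nat -> C) : Prop :=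
  forall k i, (1 <= k)%N -> (k <= h.-1)%N -> (i < n k)%N -> force h n p k i = 0.

Definition residual_force {C : fieldType} (h : nat) (n : nat -> nat)
  (p : nat -> nat -> C) : C := force h n p 0%N 0%N.

(** The force [F_{k,i}] is a sum of pairwise interactions [c_k c_l / (p_{k,i} - p_{l,j})]
    which are antisymmetric under exchange of the two points. Hence the forces of a
    configuration add up to zero, and, since [x/(x-y) + y/(y-x) = 1], the moments
    [sum p_{k,i} F_{k,i}] add up to a constant depending only on the type:
    [sum_k (1 - c_k) - h]. For a balanced configuration only the two end rows
    contribute, which gives [F_{h,1} = - F_C] and
    [(p_{0,1} - p_{h,1}) F_C = 1 - sum_k c_k = - sum_(k >= 1) c_k] since [c_0 = 1]. *)
From HB Require Import structures.
From mathcomp Require Import all_boot all_order all_algebra.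
From mathcomp Require Import reals complex.
From mathcomp Require Import ring.
Import Order.TTheory GRing.Theory Num.Theory.
Local Open Scope ring_scope.

Lemma sum_offdiag_swap (V : nmodType) m (f : 'I_m -> 'I_m -> V) :
  \sum_(i < m) \sum_(j < m | j != i) f i j = \sum_(i < m) \sum_(j < m | j != i) f j i.
Proof.
rewrite (exchange_big_dep xpredT) //=; apply: eq_bigr => i _.
by apply: eq_bigl => j; rewrite eq_sym.
Qed.

Lemma mulr_div_subr_sym (C : fieldType) (x y a : C) :
  x != y -> x * (a / (x - y)) + y * (a / (y - x)) = a.
Proof.
move=> neq_xy; have nz_xy : x - y != 0 by rewrite subr_eq0.
have nz_yx : y - x != 0 by rewrite subr_eq0 eq_sym.
by field; rewrite nz_xy nz_yx.
Qed.

Lemma sum_offdiag_div_sub (C : numFieldType) m (q : nat -> C) (a : C) :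
  \sum_(i < m) \sum_(j < m | (j : nat) != i) a / (q i - q j) = 0.
Proof.
set S := \sum_i _; have : S = - S.
  rewrite {1}/S sum_offdiag_swap -sumrN; apply: eq_bigr => i _.
  by rewrite -sumrN; apply: eq_bigr => j _; rewrite -[q j - q i]opprB invrN mulrN.
by move/eqP; rewrite -subr_eq0 opprK -mulr2n mulrn_eq0 => /eqP.
Qed.

Lemma sum_offdiag_moment (C : fieldType) m (q : nat -> C) (a : C) :
  (forall i j, (i < m)%N -> (j < m)%N -> i <> j -> q i != q j) ->
  2 * \sum_(i < m) q i * \sum_(j < m | (j : nat) != i) a / (q i - q j)
  = a * (m * m.-1)%:R.
Proof.
move=> inj_q; under eq_bigr do rewrite mulr_sumr.
rewrite mulr2n mulrDl mul1r [X in _ + X]sum_offdiag_swap -big_split /=.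
rewrite (eq_bigr (fun=> a *+ m.-1)) => [|i _].
  by rewrite sumr_const card_ord -mulrnA mulnC mulr_natr.
rewrite -big_split /= (eq_bigr (fun=> a)) => [|j neq_ji].
  by rewrite sumr_const cardC1 card_ord.
apply: mulr_div_subr_sym; apply: inj_q => // eq_ij.
by rewrite eq_ij eqxx in neq_ji.
Qed.

Lemma sum_neighbours (V : nmodType) h (f g : nat -> V) :
  \sum_(0 <= k < h.+1) ((if (k < h)%N then f k else 0) + (if (0 < k)%N then g k else 0))
  = \sum_(0 <= k < h) (f k + g k.+1).
Proof.
rewrite big_split big_split /= [X in X + _]big_nat_recr //= ltnn addr0.
rewrite big_nat_recl //= add0r; congr (_ + _).
by rewrite big_nat_cond [RHS]big_nat_cond; apply: eq_bigr => k /andP[/andP[_ ->]].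
Qed.

Lemma big_nat_ends (V : nmodType) h (G : nat -> V) :
  (forall k, (0 < k <= h)%N -> G k = 0) ->
  \sum_(0 <= k < h.+2) G k = G 0%N + G h.+1.
Proof.
move=> G_mid; rewrite big_nat_recl // big_nat_recr //= big_nat big1 ?add0r //.
by move=> k /andP[_ lt_kh]; apply: G_mid.
Qed.

Section Forces.
Context {C : numFieldType} (h : nat) (n : nat -> nat) (p : nat -> nat -> C).

Definition row_force k l : C :=
  \sum_(i < n k) \sum_(j < n l) cw n k * cw n l / (p k i - p l j).

Definition row_moment k l : C :=
  \sum_(i < n k) p k i * \sum_(j < n l) cw n k * cw n l / (p k i - p l j).

Lemma row_forceC k l : row_force l k = - row_force k l.
Proof.
rewrite /row_force exchange_big -sumrN; apply: eq_bigr => i _.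
rewrite -sumrN; apply: eq_bigr => j _.
by rewrite -[p l j - p k i]opprB invrN mulrN [cw n l * _]mulrC.
Qed.

Lemma row_momentC k l : (0 < n k)%N -> (0 < n l)%N ->
    (forall i j, (i < n k)%N -> (j < n l)%N -> p k i != p l j) ->
  row_moment k l + row_moment l k = 1.
Proof.
move=> nk_gt0 nl_gt0 sep_kl; rewrite /row_moment.
under eq_bigr do rewrite mulr_sumr.
under [X in _ + X]eq_bigr do rewrite mulr_sumr.
rewrite [X in _ + X]exchange_big -big_split /=.
rewrite (eq_bigr (fun=> cw n k * cw n l *+ n l)) => [|i _].
  rewrite sumr_const card_ord -mulrnA mulnC -mulr_natr /cw natrM.
  have nat_nz m : (0 < m)%N -> m%:R != 0 :> C by rewrite pnatr_eq0 -lt0n.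
  by rewrite mulrACA !mulVf ?mulr1 ?nat_nz.
rewrite -big_split (eq_bigr (fun=> cw n k * cw n l)) ?sumr_const ?card_ord // => j _ /=.
by rewrite [cw n l * _]mulrC mulr_div_subr_sym ?sep_kl.
Qed.

Lemma sum_force_row k : \sum_(i < n k) force h n p k i
  = - (if (k < h)%N then row_force k k.+1 else 0)
    - (if (0 < k)%N then row_force k k.-1 else 0).
Proof.
rewrite /force sumrB sumrB -mulr_sumr sum_offdiag_div_sub mulr0 sub0r.
by congr (- _ - _); case: ifP => _ //; rewrite big1.
Qed.

Lemma sum_moment_force_row k : (0 < n k)%N ->
    (forall i j, (i < n k)%N -> (j < n k)%N -> i <> j -> p k i != p k j) ->
  \sum_(i < n k) p k i * force h n p k i
  = (1 - cw n k) - (if (k < h)%N then row_moment k k.+1 else 0)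
    - (if (0 < k)%N then row_moment k k.-1 else 0).
Proof.
move=> nk_gt0 inj_pk.
under eq_bigr do rewrite /force !mulrBr mulrCA.
rewrite sumrB sumrB -mulr_sumr sum_offdiag_moment //.
congr (_ - _ - _); last 2 first.
- by case: ifP => _ //; rewrite big1 // => i _; rewrite mulr0.
- by case: ifP => _ //; rewrite big1 // => i _; rewrite mulr0.
rewrite /cw; case: (n k) nk_gt0 => // m _.
have nz_m1 : m%:R + 1 != 0 :> C by rewrite natr1 pnatr_eq0.
by rewrite /= natrM -addn1 natrD; field.
Qed.

Lemma sum_force_eq0 :
  \sum_(0 <= k < h.+1) \sum_(i < n k) force h n p k i = 0.
Proof.
under eq_bigr do rewrite sum_force_row -opprD.
rewrite sumrN sum_neighbours big1 ?oppr0 // => k _.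
by rewrite /= row_forceC addNr.
Qed.

Hypothesis config : is_config h n p.

Lemma sum_moment_force :
  \sum_(0 <= k < h.+1) \sum_(i < n k) p k i * force h n p k i
  = \sum_(0 <= k < h.+1) (1 - cw n k) - h%:R.
Proof.
case: config => _ nk_gt0 _ inj_p sep_p.
rewrite (eq_big_nat _ _ (F2 := fun k => (1 - cw n k)
   - ((if (k < h)%N then row_moment k k.+1 else 0)
      + (if (0 < k)%N then row_moment k k.-1 else 0)))) => [|k /andP[_ le_kh]].
  rewrite sumrB sum_neighbours [X in _ - X](eq_big_nat _ _ (F2 := fun=> 1)).
    by rewrite sumr_const_nat subn0.
  move=> k /andP[_ lt_kh]; rewrite /= row_momentC ?nk_gt0 // ?(ltnW lt_kh) //.
  by move=> i j; apply: sep_p.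
rewrite opprD addrA sum_moment_force_row ?nk_gt0 //.
by move=> i j; apply: inj_p.
Qed.

End Forces.

Theorem proposition3p1 (R : realType) (h : nat) (n : nat -> nat)
  (p : nat -> nat -> R[i]) :
  is_config h n p -> balanced h n p ->
  [/\ force h n p h 0%N = - residual_force h n p,
      (p h 0%N - p 0%N 0%N) * residual_force h n p
        = \sum_(1 <= k < h.+1) (n k)%:R^-1
    & residual_force h n p != 0].
Proof.
move=> config bal; have [h_gt0 nk_gt0 [n0 nh] _ _] := config.
case: h h_gt0 nk_gt0 nh bal config => // h _ nk_gt0 nh bal config.
set F := residual_force _ _ _.
have mid_rows (G : nat -> nat -> R[i]) :
    \sum_(0 <= k < h.+2) \sum_(i < n k) G k i * force h.+1 n p k i
    = G 0%N 0%N * F + G h.+1 0%N * force h.+1 n p h.+1 0.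
  rewrite big_nat_ends => [|k /andP[k_gt0 le_kh]].
    by rewrite n0 nh !big_ord1.
  by rewrite big1 // => i _; rewrite bal ?mulr0.
have end_force : force h.+1 n p h.+1 0 = - F.
  have := mid_rows (fun _ _ => 1); under eq_bigr do under eq_bigr do rewrite mul1r.
  by rewrite sum_force_eq0 !mul1r => /eqP; rewrite eq_sym addrC addr_eq0 => /eqP.
have := sum_moment_force h.+1 n p config; rewrite mid_rows end_force.
rewrite sumrB sumr_const_nat subn0 big_nat_recl // /cw n0 invr1 big_add1 /=.
set T := \sum_(0 <= k < h.+1) _ => moment.
have moment_eq : (p h.+1 0%N - p 0%N 0%N) * F = T.
  have -> : T = - (p 0%N 0%N * F + p h.+1 0%N * - F).
    by rewrite moment -[h.+2]addn1 natrD; ring.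
  by ring.
have T_gt0 : 0 < T.
  rewrite /T big_nat_recl // ltr_pwDl ?sumr_ge0 // => [|k _]; last by rewrite invr_ge0.
  by rewrite invr_gt0 ltr0n nk_gt0.
split => //.
by apply: contraTneq T_gt0 => F0; rewrite -moment_eq F0 mulr0 ltxx.
Qed.
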